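(* Let $R$ be a commutative ring, let $I$ be a 2-absorbing ideal of $R$, let $J$ be an ideal of $R$, and let $x,y\in R$ satisfy $xyJ\subseteq I$. Then $xy\in I$ or $xJ\subseteq I$ or $yJ\subseteq I$.
   Context: All rings are commutative with identity $1\neq 0$. An ideal $I$ of $R$ is 2-absorbing if whenever $a,b,c\in R$ and $abc\in I$, then $ab\in I$ or $ac\in I$ or $bc\in I$. *)

From mathcomp Require Import all_boot all_algebra.
Set Implicit Arguments. Unset Strict Implicit. Unset Printing Implicit Defensive.
Import GRing.Theory.
Local Open Scope ring_scope.

Definition is_ideal (R : comNzRingType) (I : R -> Prop) : Prop :=
  [/\ I 0,
      (forall a b, I a -> I b -> I (a + b)),
      (forall a, I a -> I (- a)) &
      (forall r a, I a -> I (r * a))].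

Definition two_absorbing (R : comNzRingType) (I : R -> Prop) : Prop :=
  is_ideal I /\
  forall a b c : R, I (a * b * c) -> [\/ I (a * b), I (a * c) | I (b * c)].

(* If neither [xJ] nor [yJ] lies in [I] and [xy] is not in [I], pick [a, b] in [J]
   with [xa, yb] outside [I].  Two-absorption applied to [xya] and [xyb] forces
   [ya, xb] into [I]; applied to [xy(a + b)] it forces [x(a + b)] or [y(a + b)]
   into [I], whence [xa] or [yb] is in [I] after subtracting [xb] or [ya]. *)

From Stdlib Require Import Classical.
From mathcomp Require Import all_boot all_algebra.
Local Open Scope ring_scope.
Import GRing.Theory.

Section TwoAbsorbing.

Variables (R : comNzRingType) (I : R -> Prop).

Lemma ideal_subr : is_ideal I -> forall u v, I u -> I v -> I (u - v).
Proof. by case=> _ ID IN _ u v Iu Iv; apply: ID => //; apply: IN. Qed.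

Lemma ideal_addr_cancel : is_ideal I -> forall u v, I (u + v) -> I v -> I u.
Proof. by move=> idI u v Iuv Iv; have := ideal_subr idI _ _ Iuv Iv; rewrite addrK. Qed.

Hypothesis absI : two_absorbing I.

Lemma two_absorbing_cancel x y j :
  I (x * y * j) -> ~ I (x * y) -> ~ I (x * j) -> I (y * j).
Proof. by move=> Ixyj nxy nxj; case: absI => _ /(_ _ _ _ Ixyj) []. Qed.

Lemma two_absorbing_sum_contra (J : R -> Prop) x y a b :
  is_ideal J -> (forall j, J j -> I (x * y * j)) -> ~ I (x * y) ->
  J a -> J b -> ~ I (x * a) -> ~ I (y * b) -> False.
Proof.
case: absI => idI _ [_ JD _ _] IxyJ nxy Ja Jb nxa nyb.
have Iya : I (y * a) by exact: two_absorbing_cancel (IxyJ _ Ja) nxy nxa.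
have Ixb : I (x * b).
  apply: (two_absorbing_cancel y x b) nyb; last by rewrite mulrC.
  by rewrite [y * x]mulrC; exact: IxyJ.
have Ixyab := IxyJ _ (JD _ _ Ja Jb).
have [Ixab | Iyab] : I (x * (a + b)) \/ I (y * (a + b)).
  case: (classic (I (x * (a + b)))) => [|nxab]; first by left.
  by right; exact: two_absorbing_cancel Ixyab nxy nxab.
- by apply: nxa; apply: (ideal_addr_cancel idI _ (x * b)); rewrite // -mulrDr.
- by apply: nyb; apply: (ideal_addr_cancel idI _ (y * a)); rewrite // addrC -mulrDr.
Qed.

End TwoAbsorbing.

Arguments two_absorbing_sum_contra {R I} absI {J x y a b}.

Theorem lemma2 (R : comNzRingType) (I J : R -> Prop) (x y : R) :
  two_absorbing I -> is_ideal J ->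
  (forall j, J j -> I (x * y * j)) ->
  [\/ I (x * y), (forall j, J j -> I (x * j)) | (forall j, J j -> I (y * j))].
Proof.
move=> absI idJ IxyJ.
case: (classic (I (x * y))) => [|nxy]; first by constructor 1.
case: (classic (forall j, J j -> I (x * j))) => [|nxJ]; first by constructor 2.
case: (classic (forall j, J j -> I (y * j))) => [|nyJ]; first by constructor 3.
have [a /(imply_to_and (J a)) [Ja nxa]] := not_all_ex_not _ _ nxJ.
have [b /(imply_to_and (J b)) [Jb nyb]] := not_all_ex_not _ _ nyJ.
by exfalso; apply: (two_absorbing_sum_contra absI idJ IxyJ nxy Ja Jb).
Qed.
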